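(* Let $X$ and $Y$ be independent nonnegative random variables with distributions $F$ and $G$, where $F$ has unbounded support, and let $H$ be the distribution of $XY$. If $G^{*k}\in\mathcal L$ for some integer $k\ge1$, then for every constant $d>0$, $$\overline G(x/d)-\overline G\big((x+1)/d\big)=o\big(\overline H(x)\big)\quad\text{as }x\to\infty.$$
   Context: For a distribution $V$, $\overline V=1-V$ denotes its tail, and $V^{*k}$ denotes the $k$-fold convolution of $V$ with itself (the distribution of the sum of $k$ independent copies). All limits are as $x\to\infty$; $f(x)\sim g(x)$ means $f(x)/g(x)\to1$ and $f(x)=o(g(x))$ means $f(x)/g(x)\to0$. A distribution $V$ is long-tailed, written $V\in\mathcal L$, if $\overline V(x)>0$ for all $x$ and $\overline V(x-t)\sim\overline V(x)$ for every real $t$. *)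

From Stdlib Require Import Reals Lra.
Open Scope R_scope.

Record ProbSpace := {
  Omega : Type;
  is_event : (Omega -> Prop) -> Prop;
  prob : (Omega -> Prop) -> R;
  ev_full : is_event (fun _ => True);
  ev_compl : forall A, is_event A -> is_event (fun w => ~ A w);
  ev_union : forall A : nat -> Omega -> Prop,
      (forall n, is_event (A n)) -> is_event (fun w => exists n, A n w);
  prob_nonneg : forall A, is_event A -> 0 <= prob A;
  prob_full : prob (fun _ => True) = 1;
  prob_sigma : forall A : nat -> Omega -> Prop,
      (forall n, is_event (A n)) ->
      (forall m n w, m <> n -> A m w -> A n w -> False) ->
      infinite_sum (fun n => prob (A n)) (prob (fun w => exists n, A n w))
}.

Definition random_var (Ps : ProbSpace) (X : Omega Ps -> R) : Prop :=
  forall x, is_event Ps (fun w => X w <= x).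

Definition cdf (Ps : ProbSpace) (X : Omega Ps -> R) : R -> R :=
  fun x => prob Ps (fun w => X w <= x).

Definition tail (V : R -> R) : R -> R := fun x => 1 - V x.

Fixpoint sumR (f : nat -> R) (n : nat) : R :=
  match n with O => 0 | S m => sumR f m + f m end.
Fixpoint prodR (f : nat -> R) (n : nat) : R :=
  match n with O => 1 | S m => prodR f m * f m end.

Definition indep2 (Ps : ProbSpace) (X Y : Omega Ps -> R) : Prop :=
  forall a b, prob Ps (fun w => X w <= a /\ Y w <= b)
              = prob Ps (fun w => X w <= a) * prob Ps (fun w => Y w <= b).

Definition indep_fam (Ps : ProbSpace) (Y : nat -> Omega Ps -> R) (k : nat) : Prop :=
  forall a : nat -> R,
    prob Ps (fun w => forall i, (i < k)%nat -> Y i w <= a i)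
    = prodR (fun i => prob Ps (fun w => Y i w <= a i)) k.

Definition conv_power (G : R -> R) (k : nat) (V : R -> R) : Prop :=
  exists (Ps : ProbSpace) (Y : nat -> Omega Ps -> R),
    (forall i, (i < k)%nat -> random_var Ps (Y i)) /\
    (forall i, (i < k)%nat -> cdf Ps (Y i) = G) /\
    indep_fam Ps Y k /\
    cdf Ps (fun w => sumR (fun i => Y i w) k) = V.

Definition asymp_equiv (f g : R -> R) : Prop :=
  forall eps, eps > 0 -> exists M, forall x, x >= M -> Rabs (f x / g x - 1) < eps.

Definition little_o (f g : R -> R) : Prop :=
  forall eps, eps > 0 -> exists M, forall x, x >= M -> Rabs (f x / g x) < eps.

Definition long_tailed (V : R -> R) : Prop :=
  (forall x, tail V x > 0) /\
  (forall t, asymp_equiv (fun x => tail V (x - t)) (tail V)).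

From Stdlib Require Import Reals Lra Lia Classical FunctionalExtensionality PropExtensionality.
Open Scope R_scope.

(* Write G for the law of Y, V = G^{*k}, y = x/d and h = 1/d, and fix b >= 0 with
   G(b) > 0.  The event {Y_1 in (y, y+h], Y_i <= b for i > 1} for k independent
   copies of Y forces their sum into (y - k, y + h + k b], so
     G(b)^(k-1) (G(y+h) - G(y)) <= V̄(y - k) - V̄(y + h + k b) = o(V̄(y))
   because V is long-tailed.  A union bound gives V̄(y) <= k Ḡ(y/k), and
   independence gives H̄(x) >= F̄(k d) Ḡ(x/(k d)), where F̄(k d) > 0 since F has
   unbounded support.  Chaining the three bounds proves the claim. *)

(** * Events and probabilities *)

Section Events.

Variable P : ProbSpace.

Lemma pred_ext (A B : Omega P -> Prop) : (forall w, A w <-> B w) -> A = B.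
Proof.
  intros H; apply functional_extensionality; intros w.
  apply propositional_extensionality; auto.
Qed.

Lemma ev_ext (A B : Omega P -> Prop) : (forall w, A w <-> B w) -> is_event P A -> is_event P B.
Proof. intros H; rewrite (pred_ext A B H); auto. Qed.

Lemma prob_ext (A B : Omega P -> Prop) : (forall w, A w <-> B w) -> prob P A = prob P B.
Proof. intros H; rewrite (pred_ext A B H); auto. Qed.

Lemma ev_empty : is_event P (fun _ => False).
Proof. apply (ev_ext (fun w => ~ True)); [tauto | apply ev_compl, ev_full]. Qed.

Lemma ev_or A B : is_event P A -> is_event P B -> is_event P (fun w => A w \/ B w).
Proof.
  intros HA HB.
  apply (ev_ext (fun w => exists n : nat, match n with O => A | _ => B end w)).
  - intros w; split.
    + intros [[|n] Hn]; tauto.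
    + intros [H|H]; [exists O | exists 1%nat]; auto.
  - apply ev_union; intros [|n]; auto.
Qed.

Lemma ev_and A B : is_event P A -> is_event P B -> is_event P (fun w => A w /\ B w).
Proof.
  intros HA HB.
  apply (ev_ext (fun w => ~ (~ A w \/ ~ B w))).
  - intros w; split; [intros H; split; apply NNPP; tauto | tauto].
  - apply ev_compl, ev_or; apply ev_compl; auto.
Qed.

Lemma ev_finunion (A : nat -> Omega P -> Prop) m :
  (forall i, (i < m)%nat -> is_event P (A i)) ->
  is_event P (fun w => exists i, (i < m)%nat /\ A i w).
Proof.
  induction m as [|m IH]; intros H.
  - apply (ev_ext (fun _ => False)); [intros w; split; [tauto | intros [i [Hi _]]; lia] | apply ev_empty].
  - apply (ev_ext (fun w => (exists i, (i < m)%nat /\ A i w) \/ A m w)).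
    + intros w; split.
      * intros [[i [Hi Ai]] | Am]; exists i || exists m; split; auto; lia.
      * intros [i [Hi Ai]]. destruct (Nat.eq_dec i m) as [->|]; auto.
        left; exists i; split; auto; lia.
    + apply ev_or; [apply IH; intros; apply H; lia | apply H; lia].
Qed.

Lemma ev_finint (A : nat -> Omega P -> Prop) m :
  (forall i, (i < m)%nat -> is_event P (A i)) ->
  is_event P (fun w => forall i, (i < m)%nat -> A i w).
Proof.
  intros H. apply (ev_ext (fun w => ~ exists i, (i < m)%nat /\ ~ A i w)).
  - intros w; split.
    + intros H1 i Hi. apply NNPP. intros H2. apply H1. eauto.
    + intros H1 [i [Hi H2]]. auto.
  - apply ev_compl, ev_finunion. intros; apply ev_compl; auto.
Qed.

Lemma infinite_sum_const_eq0 c l : infinite_sum (fun _ => c) l -> c = 0.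
Proof.
  intros H. destruct (Req_dec c 0) as [|Hc]; auto.
  assert (Hp : Rabs c / 4 > 0) by (pose proof (Rabs_pos_lt c Hc); lra).
  destruct (H _ Hp) as [N HN].
  pose proof (HN N (le_n N)) as H1. pose proof (HN (S N) (le_S _ _ (le_n N))) as H2.
  unfold R_dist in *. rewrite !sum_cte, !S_INR in *.
  (* consecutive partial sums differ by c, so both cannot be within |c|/4 of l *)
  pose proof (Rabs_triang (c * (INR N + 1 + 1) - l) (- (c * (INR N + 1) - l))) as T.
  rewrite Rabs_Ropp in T.
  replace (c * (INR N + 1 + 1) - l + - (c * (INR N + 1) - l)) with c in T by ring.
  lra.
Qed.

Lemma prob_empty : prob P (fun _ => False) = 0.
Proof.
  apply (infinite_sum_const_eq0 _ (prob P (fun w => exists n : nat, False))).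
  apply (prob_sigma P (fun _ _ => False)); [intros; apply ev_empty | tauto].
Qed.

Lemma prob_add A B : is_event P A -> is_event P B -> (forall w, A w -> B w -> False) ->
  prob P (fun w => A w \/ B w) = prob P A + prob P B.
Proof.
  intros HA HB D.
  set (s := fun n => match n with O => A | 1%nat => B | _ => fun _ => False end).
  assert (Hs : forall m, sum_f_R0 (fun n => prob P (s n)) (S m) = prob P A + prob P B).
  { induction m as [|m IH]; [simpl; ring|]. rewrite tech5, IH. simpl. rewrite prob_empty. ring. }
  apply (uniqueness_sum (fun n => prob P (s n))).
  - rewrite (prob_ext _ (fun w => exists n, s n w)).
    + apply prob_sigma.
      * intros [|[|n]]; simpl; auto using ev_empty.
      * intros [|[|m]] [|[|n]] w; simpl; try tauto; intros; try lia; eauto.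
    + intros w; split.
      * intros [h|h]; [exists O | exists 1%nat]; auto.
      * intros [[|[|n]] Hn]; simpl in Hn; tauto.
  - intros eps Heps; exists 1%nat; intros [|n] Hn; [lia|].
    unfold R_dist. rewrite Hs, Rminus_diag, Rabs_R0. lra.
Qed.

Lemma prob_compl A : is_event P A -> prob P (fun w => ~ A w) = 1 - prob P A.
Proof.
  intros HA. rewrite <- (prob_full P).
  rewrite (prob_ext (fun _ => True) (fun w => A w \/ ~ A w)) by (intros w; tauto).
  rewrite prob_add; auto using ev_compl. ring.
Qed.

Lemma prob_diff A B : is_event P A -> is_event P B -> (forall w, A w -> B w) ->
  prob P (fun w => B w /\ ~ A w) = prob P B - prob P A.
Proof.
  intros HA HB S.
  rewrite (prob_ext B (fun w => A w \/ (B w /\ ~ A w))) by (intros w; split; [tauto | intros [h|h]; [apply S |]; tauto]).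
  rewrite prob_add; auto using ev_and, ev_compl. ring. tauto.
Qed.

Lemma prob_mono A B : is_event P A -> is_event P B -> (forall w, A w -> B w) ->
  prob P A <= prob P B.
Proof.
  intros HA HB S. pose proof (prob_diff A B HA HB S).
  pose proof (prob_nonneg P _ (ev_and _ _ HB (ev_compl P _ HA))). lra.
Qed.

Lemma prob_union_le A B : is_event P A -> is_event P B ->
  prob P (fun w => A w \/ B w) <= prob P A + prob P B.
Proof.
  intros HA HB.
  rewrite (prob_ext _ (fun w => A w \/ (B w /\ ~ A w))) by (intros; tauto).
  rewrite prob_add; auto using ev_and, ev_compl; [|tauto].
  pose proof (prob_mono (fun w => B w /\ ~ A w) B (ev_and _ _ HB (ev_compl P _ HA)) HB
                (fun w h => proj1 h)).
  lra.
Qed.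

Lemma prob_finunion_le (A : nat -> Omega P -> Prop) m :
  (forall i, (i < m)%nat -> is_event P (A i)) ->
  prob P (fun w => exists i, (i < m)%nat /\ A i w) <= sumR (fun i => prob P (A i)) m.
Proof.
  induction m as [|m IH]; intros H; simpl.
  - rewrite (prob_ext _ (fun _ => False)), prob_empty; [lra|].
    intros w; split; [intros [i [Hi _]]; lia | tauto].
  - rewrite (prob_ext _ (fun w => (exists i, (i < m)%nat /\ A i w) \/ A m w)).
    + assert (Hm : forall i, (i < m)%nat -> is_event P (A i)) by (intros; apply H; lia).
      pose proof (prob_union_le _ _ (ev_finunion A m Hm) (H m ltac:(lia))).
      pose proof (IH Hm). lra.
    + intros w; split.
      * intros [i [Hi Ai]]. destruct (Nat.eq_dec i m) as [->|]; auto.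
        left; exists i; split; auto; lia.
      * intros [[i [Hi Ai]] | Am]; exists i || exists m; split; auto; lia.
Qed.

End Events.

(** * Measurability *)

Lemma exists_inv_INR_S_lt e : e > 0 -> exists n : nat, / (INR n + 1) < e.
Proof.
  intros He. destruct (archimed_cor1 e He) as [N [H1 H2]].
  exists N. eapply Rle_lt_trans; [|apply H1].
  apply Rinv_le_contravar; [apply lt_0_INR; lia | lra].
Qed.

Lemma exists_nat_ratio_between a b :
  a < b -> exists n m j : nat, a < (INR m - INR j) / (INR n + 1) < b.
Proof.
  intros Hab. destruct (exists_inv_INR_S_lt (b - a)) as [n Hn]; [lra|].
  set (N := INR n + 1). assert (HN : N > 0) by (unfold N; pose proof (pos_INR n); lra).
  assert (H1 : 1 < (b - a) * N).
  { apply (Rmult_lt_compat_r N) in Hn; auto. rewrite Rinv_l in Hn; lra. }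
  set (p := up (a * N)). destruct (archimed (a * N)) as [A1 A2].
  exists n, (Z.to_nat p), (Z.to_nat (- p)).
  replace (INR (Z.to_nat p) - INR (Z.to_nat (- p))) with (IZR p)
    by (rewrite !INR_IZR_INZ, <- minus_IZR; f_equal; lia).
  fold N; fold p in A1, A2.
  split; apply (Rmult_lt_reg_r N); auto; unfold Rdiv; rewrite Rmult_assoc, Rinv_l; lra.
Qed.

Section Measurability.

Variable P : ProbSpace.

Lemma rv_ext (f g : Omega P -> R) : (forall w, f w = g w) -> random_var P f -> random_var P g.
Proof.
  intros H Hf x. apply (ev_ext P (fun w => f w <= x)); [intros w; rewrite H; tauto | apply Hf].
Qed.

Lemma rv_lt Z c : random_var P Z -> is_event P (fun w => Z w < c).
Proof.
  intros HZ.
  apply (ev_ext P (fun w => exists n : nat, Z w <= c - / (INR n + 1))).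
  - intros w; split.
    + intros [n Hn].
      assert (/ (INR n + 1) > 0) by (apply Rinv_0_lt_compat; pose proof (pos_INR n); lra). lra.
    + intros H. destruct (exists_inv_INR_S_lt (c - Z w)) as [n Hn]; [lra|]. exists n; lra.
  - apply ev_union; intros; apply HZ.
Qed.

Lemma rv_gt Z c : random_var P Z -> is_event P (fun w => Z w > c).
Proof. intros HZ. apply (ev_ext P (fun w => ~ Z w <= c)); [intros; lra | apply ev_compl, HZ]. Qed.

Lemma rv_const r : random_var P (fun _ => r).
Proof.
  intros x. destruct (Rle_dec r x).
  - apply (ev_ext P (fun _ => True)); [tauto | apply ev_full].
  - apply (ev_ext P (fun _ => False)); [tauto | apply ev_empty].
Qed.

Lemma rv_opp Z : random_var P Z -> random_var P (fun w => - Z w).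
Proof.
  intros HZ x. apply (ev_ext P (fun w => ~ Z w < - x)); [intros; lra|].
  apply ev_compl, rv_lt, HZ.
Qed.

Lemma rv_scale Z r : r > 0 -> random_var P Z -> random_var P (fun w => Z w * r).
Proof.
  intros Hr HZ x. apply (ev_ext P (fun w => Z w <= x / r)); [|apply HZ].
  intros w. unfold Rdiv. split; intros H.
  - apply (Rmult_le_compat_r r) in H; [|lra]. rewrite Rmult_assoc, Rinv_l in H; lra.
  - apply (Rmult_le_reg_r r); [lra|]. rewrite Rmult_assoc, Rinv_l; lra.
Qed.

Lemma rv_plus Z1 Z2 : random_var P Z1 -> random_var P Z2 -> random_var P (fun w => Z1 w + Z2 w).
Proof.
  intros H1 H2 c.
  (* Z1 + Z2 > c iff some rational q separates them: Z1 > q and Z2 > c - q *)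
  apply (ev_ext P (fun w => ~ exists n m j : nat,
     Z1 w > (INR m - INR j) / (INR n + 1) /\ Z2 w > c - (INR m - INR j) / (INR n + 1))).
  - intros w; split.
    + intros H. apply Rnot_lt_le. intros Hc. apply H.
      destruct (exists_nat_ratio_between (c - Z2 w) (Z1 w)) as [n [m [j Hq]]]; [lra|].
      exists n, m, j; lra.
    + intros H [n [m [j Hq]]]. lra.
  - apply ev_compl. do 3 (apply ev_union; intros).
    apply ev_and; apply rv_gt; auto.
Qed.

Lemma rv_sq Z : random_var P Z -> random_var P (fun w => Z w * Z w).
Proof.
  intros HZ c. destruct (Rlt_dec c 0).
  - apply (ev_ext P (fun _ => False)); [intros w; split; [tauto | nra] | apply ev_empty].
  - apply (ev_ext P (fun w => Z w <= sqrt c /\ - Z w <= sqrt c)).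
    + intros w. pose proof (sqrt_sqrt c) as S. pose proof (sqrt_pos c). split.
      * intros [A B].
        assert (0 <= (sqrt c - Z w) * (sqrt c + Z w)) by (apply Rmult_le_pos; lra). nra.
      * intros A. assert (Rabs (Z w) <= sqrt c).
        { rewrite <- sqrt_Rsqr_abs. apply sqrt_le_1_alt. exact A. }
        revert H0; unfold Rabs; destruct (Rcase_abs (Z w)); lra.
    + apply ev_and; [apply HZ | apply rv_opp, HZ].
Qed.

Lemma rv_mult Z1 Z2 : random_var P Z1 -> random_var P Z2 -> random_var P (fun w => Z1 w * Z2 w).
Proof.
  intros H1 H2.
  apply (rv_ext (fun w => ((Z1 w + Z2 w) * (Z1 w + Z2 w)
                           + - ((Z1 w + - Z2 w) * (Z1 w + - Z2 w))) * / 4)).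
  - intros; field.
  - apply rv_scale; [lra|]. apply rv_plus.
    + apply rv_sq, rv_plus; auto.
    + apply rv_opp, rv_sq, rv_plus; auto. apply rv_opp; auto.
Qed.

Lemma rv_sumR (Y : nat -> Omega P -> R) k :
  (forall i, (i < k)%nat -> random_var P (Y i)) -> random_var P (fun w => sumR (fun i => Y i w) k).
Proof.
  induction k as [|k IH]; intros H; simpl.
  - apply rv_const.
  - apply rv_plus; auto.
Qed.

End Measurability.

Lemma sumR_ext f g m : (forall i, (i < m)%nat -> f i = g i) -> sumR f m = sumR g m.
Proof. induction m; intros H; simpl; auto. rewrite IHm, H; auto. Qed.

Lemma prodR_ext f g m : (forall i, (i < m)%nat -> f i = g i) -> prodR f m = prodR g m.
Proof. induction m; intros H; simpl; auto. rewrite IHm, H; auto. Qed.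

Lemma sumR_le f g m : (forall i, (i < m)%nat -> f i <= g i) -> sumR f m <= sumR g m.
Proof.
  induction m; intros H; simpl; [lra|].
  pose proof (H m ltac:(lia)). assert (sumR f m <= sumR g m) by (apply IHm; intros; apply H; lia).
  lra.
Qed.

Lemma sumR_const c m : sumR (fun _ => c) m = INR m * c.
Proof. induction m; simpl sumR; [simpl; ring|]. rewrite IHm, S_INR; ring. Qed.

Lemma prodR_const c m : prodR (fun _ => c) m = c ^ m.
Proof. induction m; simpl; auto. rewrite IHm; ring. Qed.

Lemma sumR_S g m : sumR g (S m) = g O + sumR (fun i => g (S i)) m.
Proof. induction m; simpl in *; [ring|]. rewrite IHm. ring. Qed.

Lemma prodR_S g m : prodR g (S m) = g O * prodR (fun i => g (S i)) m.
Proof. induction m; simpl in *; [ring|]. rewrite IHm. ring. Qed.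

Section Distribution.

Variables (P : ProbSpace) (Z : Omega P -> R).
Hypothesis HZ : random_var P Z.

Lemma cdf_mono u v : u <= v -> cdf P Z u <= cdf P Z v.
Proof. intros Huv. apply prob_mono; try apply HZ. intros; lra. Qed.

Lemma cdf_pos_somewhere : exists b, 0 <= b /\ cdf P Z b > 0.
Proof.
  apply NNPP. intros Hn.
  assert (H0 : forall n, prob P (fun w => Z w <= INR n) = 0).
  { intros n. pose proof (prob_nonneg P _ (HZ (INR n))). unfold cdf in Hn.
    destruct (Rle_lt_or_eq_dec _ _ H); auto.
    exfalso; apply Hn; exists (INR n); split; [apply pos_INR | lra]. }
  (* the slices (-oo, 0] and (n-1, n] partition Omega and would all be null *)
  set (s := fun n => match n with O => fun w => Z w <= 0
                     | S m => fun w => Z w <= INR (S m) /\ ~ Z w <= INR m end).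
  assert (Hs : forall n, is_event P (s n)).
  { intros [|m]; simpl; [apply HZ | apply ev_and; [apply HZ | apply ev_compl, HZ]]. }
  assert (Hs0 : forall n, prob P (s n) = 0).
  { intros n. pose proof (prob_nonneg P _ (Hs n)).
    assert (prob P (s n) <= prob P (fun w => Z w <= INR n)).
    { apply prob_mono; auto. destruct n; simpl; [intros; simpl; lra | tauto]. }
    rewrite H0 in H1; lra. }
  assert (Hd : forall m n w, (m < n)%nat -> s m w -> s n w -> False).
  { intros m n w Hmn. destruct n as [|n]; [lia|]. destruct m as [|m]; cbv beta iota delta [s].
    - intros A [B C]. pose proof (pos_INR n). lra.
    - intros [A _] [_ C]. apply C. eapply Rle_trans; [apply A | apply le_INR; lia]. }
  assert (Hc : forall w, exists n, s n w).
  { intros w. destruct (INR_archimed 1 (Z w)) as [N HN]; [lra|].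
    assert (Z w <= INR N) by lra. clear HN. induction N.
    - exists O; simpl; auto.
    - destruct (Rle_dec (Z w) (INR N)); auto. exists (S N); simpl; split; auto. }
  assert (HS : infinite_sum (fun n => prob P (s n)) 1).
  { rewrite <- (prob_full P), (prob_ext P _ (fun w => exists n, s n w)) by (intros; split; auto).
    apply prob_sigma; auto.
    intros m n w Hmn A B. destruct (Nat.lt_gt_cases m n) as [[h|h] _]; eauto. }
  assert (H1 : infinite_sum (fun n => prob P (s n)) 0).
  { intros eps Heps; exists O; intros n _. unfold R_dist.
    rewrite (sum_eq _ (fun _ => 0)), sum_cte by auto.
    rewrite Rmult_0_l, Rminus_diag, Rabs_R0; lra. }
  pose proof (uniqueness_sum _ _ _ HS H1). lra.
Qed.

End Distribution.

(** * Tails of convolution powers *)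

Section IndependentCopies.

Variables (P : ProbSpace) (Y : nat -> Omega P -> R) (G : R -> R) (k : nat).
Hypotheses (Hrv : forall i, (i < k)%nat -> random_var P (Y i))
           (Hcdf : forall i, (i < k)%nat -> cdf P (Y i) = G)
           (Hind : indep_fam P Y k).

Lemma prob_all_le_indep (a : nat -> R) :
  prob P (fun w => forall i, (i < k)%nat -> Y i w <= a i) = prodR (fun i => G (a i)) k.
Proof.
  rewrite Hind. apply prodR_ext. intros i Hi. rewrite <- (Hcdf i Hi). reflexivity.
Qed.

Lemma prob_exists_le_null c : G c = 0 ->
  prob P (fun w => exists i, (i < k)%nat /\ Y i w <= c) = 0.
Proof.
  intros Hc. apply Rle_antisym.
  - eapply Rle_trans; [apply prob_finunion_le; intros; apply Hrv; auto|].
    rewrite (sumR_ext _ (fun _ => 0)), sumR_const; [lra|].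
    intros i Hi. rewrite <- Hc, <- (Hcdf i Hi). reflexivity.
  - apply prob_nonneg, ev_finunion. intros; apply Hrv; auto.
Qed.

End IndependentCopies.

Lemma conv_power_tail_le G k V : conv_power G k V -> (0 < k)%nat ->
  forall y, tail V y <= INR k * tail G (y / INR k).
Proof.
  intros [P [Y [Hrv [Hcdf [_ <-]]]]] Hk y.
  assert (HK : INR k > 0) by (apply lt_0_INR; lia).
  set (Big := fun i w => ~ Y i w <= y / INR k).
  assert (HBig : forall i, (i < k)%nat -> is_event P (Big i)) by (intros; apply ev_compl, Hrv; auto).
  assert (Hcover : forall w, ~ sumR (fun i => Y i w) k <= y -> exists i, (i < k)%nat /\ Big i w).
  { intros w Hw. apply NNPP. intros Hn. apply Hw.
    replace y with (sumR (fun _ => y / INR k) k) by (rewrite sumR_const; field; lra).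
    apply sumR_le. intros i Hi. apply NNPP. intros Hc. apply Hn. exists i; split; auto. }
  unfold tail, cdf at 1. rewrite <- prob_compl by (apply rv_sumR; auto).
  eapply Rle_trans; [apply prob_mono; [apply ev_compl, rv_sumR | apply ev_finunion |]; eauto|].
  eapply Rle_trans; [apply prob_finunion_le; auto|].
  rewrite <- sumR_const. apply Req_le, sumR_ext. intros i Hi.
  unfold Big. rewrite prob_compl by (apply Hrv; auto). rewrite <- (Hcdf i Hi). reflexivity.
Qed.

Lemma sumR_window (z : nat -> R) m y h b : 0 <= b ->
  y < z O <= y + h -> (forall i, (i < m)%nat -> -1 < z (S i) <= b) ->
  y - INR (S m) < sumR z (S m) <= y + (h + INR (S m) * b).
Proof.
  intros Hb H0 Hz.
  pose proof (sumR_le (fun i => z (S i)) (fun _ => b) m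
                ltac:(intros i Hi; apply Hz; lia)) as Up.
  pose proof (sumR_le (fun _ => -1) (fun i => z (S i)) m
                ltac:(intros i Hi; pose proof (Hz i Hi); lra)) as Lo.
  rewrite sumR_const in Up, Lo. rewrite sumR_S, S_INR.
  pose proof (pos_INR m). split; nra.
Qed.

Lemma conv_power_increment_le G k V b h :
  conv_power G k V -> (0 < k)%nat -> (forall x, x < 0 -> G x = 0) -> 0 <= b -> 0 <= h ->
  forall y, G b ^ (k - 1) * (G (y + h) - G y)
            <= tail V (y - INR k) - tail V (y + (h + INR k * b)).
Proof.
  intros [P [Y [Hrv [Hcdf [Hind HV]]]]] Hk HG0 Hb Hh y.
  destruct k as [|m]; [lia|]. replace (S m - 1)%nat with m by lia.
  set (Sm := fun w => sumR (fun i => Y i w) (S m)).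
  assert (HS : random_var P Sm) by (apply rv_sumR; auto).
  assert (HVz : forall z, V z = prob P (fun w => Sm w <= z)) by (intros; rewrite <- HV; reflexivity).
  (* Box u = {Y 0 <= u, Y i <= b for 0 < i} *)
  set (bound := fun (u : R) (i : nat) => match i with O => u | S _ => b end).
  set (Box := fun u w => forall i, (i < S m)%nat -> Y i w <= bound u i).
  assert (HBox : forall u, is_event P (Box u))
    by (intros u; apply ev_finint; intros i Hi; apply Hrv; auto).
  assert (pBox : forall u, prob P (Box u) = G u * G b ^ m).
  { intros u. unfold Box. rewrite (prob_all_le_indep P Y G (S m) Hcdf Hind), prodR_S.
    rewrite (prodR_ext _ (fun _ => G b)), prodR_const by reflexivity. reflexivity. }
  set (E := fun w => Box (y + h) w /\ ~ Box y w).
  assert (HE : is_event P E) by (apply ev_and; auto; apply ev_compl; auto).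
  assert (pE : prob P E = G b ^ m * (G (y + h) - G y)).
  { unfold E. rewrite prob_diff, !pBox; auto; [ring|].
    intros w Hw i Hi. specialize (Hw i Hi). destruct i; simpl in *; lra. }
  set (Neg := fun w => exists i, (i < S m)%nat /\ Y i w <= -1).
  assert (HNeg : is_event P Neg) by (apply ev_finunion; intros; apply Hrv; auto).
  assert (pNeg : prob P Neg = 0)
    by (apply (prob_exists_le_null P Y G); auto; apply HG0; lra).
  set (Win := fun w => Sm w <= y + (h + INR (S m) * b) /\ ~ Sm w <= y - INR (S m)).
  assert (HWin : is_event P Win) by (apply ev_and; [apply HS | apply ev_compl, HS]).
  assert (pWin : prob P Win = V (y + (h + INR (S m) * b)) - V (y - INR (S m))).
  { unfold Win. rewrite prob_diff, !HVz; auto.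
    intros w Hw. pose proof (pos_INR (S m)). nra. }
  (* off the null event Neg, every summand exceeds -1, so E forces Sm into the window *)
  assert (Hsub : forall w, E w -> Win w \/ Neg w).
  { intros w [H1 H2]. destruct (classic (Neg w)) as [|Hn]; auto. left. unfold Win, Sm.
    assert (Hlo : forall i, (i < S m)%nat -> -1 < Y i w).
    { intros i Hi. apply Rnot_le_gt. intros Hc. apply Hn. exists i; auto. }
    assert (H0 : y < Y O w <= y + h).
    { split; [|apply (H1 O); lia].
      apply Rnot_le_gt. intros Hc. apply H2. intros [|i] Hi; simpl; auto. }
    pose proof (sumR_window (fun i => Y i w) m y h b Hb H0
                  ltac:(intros i Hi; split; [apply Hlo | apply (H1 (S i))]; lia)).
    lra. }
  rewrite <- pE. unfold tail.
  pose proof (prob_mono P E _ HE (ev_or _ _ _ HWin HNeg) Hsub).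
  pose proof (prob_union_le P Win Neg HWin HNeg). lra.
Qed.

(** * The tail of a product *)

Lemma tail_prod_ge (P : ProbSpace) (X Y : Omega P -> R) a x :
  random_var P X -> random_var P Y -> indep2 P X Y -> a > 0 -> x > 0 ->
  tail (cdf P X) a * tail (cdf P Y) (x / a) <= tail (cdf P (fun w => X w * Y w)) x.
Proof.
  intros HX HY Hind Ha Hx. unfold tail, cdf.
  set (A := fun w => X w <= a). set (B := fun w => Y w <= x / a).
  assert (HA : is_event P A) by apply HX. assert (HB : is_event P B) by apply HY.
  assert (pAB : prob P (fun w => A w \/ B w) = prob P A + prob P B - prob P A * prob P B).
  { rewrite (prob_ext P _ (fun w => B w \/ (A w /\ ~ B w)))
      by (intros w; destruct (classic (B w)); tauto).
    rewrite prob_add by (auto using ev_and, ev_compl; tauto).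
    rewrite (prob_ext P (fun w => A w /\ ~ B w) (fun w => A w /\ ~ (A w /\ B w)))
      by (intros; tauto).
    rewrite prob_diff by (auto using ev_and; tauto).
    unfold A, B. rewrite (Hind a (x / a)). ring. }
  assert (Hsub : forall w, ~ (A w \/ B w) -> ~ X w * Y w <= x).
  { intros w Hw. unfold A, B in Hw.
    assert (x / a > 0) by (apply Rdiv_lt_0_compat; lra).
    assert (a * (x / a) < X w * Y w) by (apply Rmult_le_0_lt_compat; lra).
    replace (a * (x / a)) with x in * by (field; lra). lra. }
  pose proof (prob_mono P _ _ (ev_compl P _ (ev_or P _ _ HA HB))
                (ev_compl P _ (rv_mult P _ _ HX HY x)) Hsub) as Hle.
  rewrite prob_compl, pAB in Hle by (apply ev_or; auto).
  rewrite <- (prob_compl P (fun w => X w * Y w <= x)) by (apply rv_mult; auto).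
  fold A B. nra.
Qed.

(** * Asymptotic comparison *)

Definition eventually (Q : R -> Prop) : Prop := exists M, forall x, x >= M -> Q x.

Lemma little_o_le f g f' g' c1 c2 : 0 < c1 -> 0 < c2 -> little_o f' g' ->
  eventually (fun x => 0 <= f x /\ c1 * f x <= f' x) ->
  eventually (fun x => 0 < g' x /\ c2 * g' x <= g x) ->
  little_o f g.
Proof.
  intros Hc1 Hc2 Ho [M1 Hf] [M2 Hg] eps Heps.
  destruct (Ho (eps * c1 * c2)) as [M3 H3]; [apply Rmult_lt_0_compat; nra|].
  exists (Rmax M1 (Rmax M2 M3)). intros x Hx.
  destruct (Hf x ltac:(pose proof (Rmax_l M1 (Rmax M2 M3)); lra)) as [Hf0 Hf1].
  destruct (Hg x ltac:(pose proof (Rmax_r M1 (Rmax M2 M3)); pose proof (Rmax_l M2 M3); lra))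
    as [Hg0 Hg1].
  pose proof (H3 x ltac:(pose proof (Rmax_r M1 (Rmax M2 M3)); pose proof (Rmax_r M2 M3); lra))
    as Hx3.
  assert (Hgx : 0 < g x) by nra.
  assert (Hq : f' x / g' x < eps * c1 * c2) by (pose proof (Rle_abs (f' x / g' x)); lra).
  apply Rmult_lt_compat_r with (r := g' x) in Hq; auto.
  unfold Rdiv in Hq. rewrite Rmult_assoc, Rinv_l, Rmult_1_r in Hq by lra.
  rewrite Rabs_pos_eq by (apply Rmult_le_pos; [lra | left; apply Rinv_0_lt_compat; lra]).
  apply (Rmult_lt_reg_r (c1 * g x)); [nra|].
  unfold Rdiv. replace (f x * / g x * (c1 * g x)) with (c1 * f x) by (field; lra).
  assert (eps * c1 * (c2 * g' x) <= eps * c1 * g x) by (apply Rmult_le_compat_l; nra).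
  lra.
Qed.

Lemma little_o_comp_div f g d : d > 0 -> little_o f g ->
  little_o (fun x => f (x / d)) (fun x => g (x / d)).
Proof.
  intros Hd Ho eps Heps. destruct (Ho eps Heps) as [M HM].
  exists (M * d). intros x Hx. apply HM.
  apply Rle_ge, (Rmult_le_reg_r d); auto.
  unfold Rdiv. rewrite Rmult_assoc, Rinv_l; lra.
Qed.

Lemma asymp_equiv_sub_little_o f1 f2 g : asymp_equiv f1 g -> asymp_equiv f2 g ->
  little_o (fun x => f1 x - f2 x) g.
Proof.
  intros H1 H2 eps Heps.
  destruct (H1 (eps / 2)) as [M1 HM1]; [lra|]. destruct (H2 (eps / 2)) as [M2 HM2]; [lra|].
  exists (Rmax M1 M2). intros x Hx.
  pose proof (HM1 x ltac:(pose proof (Rmax_l M1 M2); lra)).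
  pose proof (HM2 x ltac:(pose proof (Rmax_r M1 M2); lra)).
  replace ((f1 x - f2 x) / g x) with ((f1 x / g x - 1) - (f2 x / g x - 1)) by (unfold Rdiv; ring).
  pose proof (Rabs_triang (f1 x / g x - 1) (- (f2 x / g x - 1))). rewrite Rabs_Ropp in H3.
  unfold Rminus at 1. lra.
Qed.

Lemma long_tailed_tail_diff V t s : long_tailed V ->
  little_o (fun y => tail V (y - t) - tail V (y + s)) (tail V).
Proof.
  intros [_ HV]. apply asymp_equiv_sub_little_o; [apply HV|].
  intros eps Heps. destruct (HV (- s) eps Heps) as [M HM].
  exists M. intros x Hx. replace (x + s) with (x - - s) by ring. auto.
Qed.

Theorem mainTheorem5 :
  forall (Ps : ProbSpace) (X Y : Omega Ps -> R),
    random_var Ps X -> random_var Ps Y ->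
    indep2 Ps X Y ->
    (* X, Y nonnegative *)
    (forall x, x < 0 -> cdf Ps X x = 0) ->
    (forall x, x < 0 -> cdf Ps Y x = 0) ->
    (* F has unbounded support *)
    (forall x, tail (cdf Ps X) x > 0) ->
    forall k : nat, (1 <= k)%nat ->
    (exists V, conv_power (cdf Ps Y) k V /\ long_tailed V) ->
    forall d : R, d > 0 ->
      little_o
        (fun x => tail (cdf Ps Y) (x / d) - tail (cdf Ps Y) ((x + 1) / d))
        (tail (cdf Ps (fun w => X w * Y w))).
Proof.
  intros Ps X Y HX HY Hind _ HY0 HXu k Hk [V [HVk HVlt]] d Hd.
  set (G := cdf Ps Y) in *.
  destruct (cdf_pos_somewhere Ps Y HY) as [b [Hb HGb]]; fold G in HGb.
  set (K := INR k). assert (HK : K > 0) by (apply lt_0_INR; lia).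
  set (a := K * d). assert (Ha : a > 0) by (unfold a; nra).
  assert (Hd' : / d > 0) by (apply Rinv_0_lt_compat; lra).
  apply (little_o_le _ _ (fun x => tail V (x / d - K) - tail V (x / d + (/ d + K * b)))
           (fun x => tail V (x / d)) (G b ^ (k - 1)) (tail (cdf Ps X) a / K)).
  - apply pow_lt; auto.
  - apply Rdiv_lt_0_compat; [apply HXu | exact HK].
  - apply (little_o_comp_div (fun y => tail V (y - K) - tail V (y + (/ d + K * b))) (tail V));
      auto using long_tailed_tail_diff.
  - exists 0. intros x _.
    replace ((x + 1) / d) with (x / d + / d) by (field; lra).
    replace (tail G (x / d) - tail G (x / d + / d)) with (G (x / d + / d) - G (x / d))
      by (unfold tail; ring).
    pose proof (cdf_mono Ps Y HY (x / d) (x / d + / d)) as Hmono; fold G in Hmono.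
    split; [lra|].
    apply conv_power_increment_le; auto; lra.
  - exists 1. intros x Hx. split; [apply HVlt|].
    pose proof (conv_power_tail_le _ _ _ HVk Hk (x / d)) as HV.
    pose proof (tail_prod_ge Ps X Y a x HX HY Hind Ha ltac:(lra)) as HH.
    fold K in HV; fold G in HH.
    replace (x / d / K) with (x / a) in HV by (unfold a; field; lra).
    assert (HFa : 0 < tail (cdf Ps X) a / K) by (apply Rdiv_lt_0_compat; [apply HXu | exact HK]).
    pose proof (Rmult_le_compat_l _ _ _ (Rlt_le _ _ HFa) HV) as HV'.
    replace (tail (cdf Ps X) a / K * (K * tail G (x / a)))
      with (tail (cdf Ps X) a * tail G (x / a)) in HV' by (field; lra).
    lra.
Qed.
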